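(* Let $q$ be a non-negative integer and $\Lambda$ a unital commutative ring which is $q$-torsion-free. Let $\mathfrak g$ be a Lie algebra over $\Lambda$ with free presentation $0\to\mathfrak r\to\mathfrak f\xrightarrow{\partial}\mathfrak g\to0$, let $\mathfrak c=\mathfrak f/(\mathfrak r\#_q\mathfrak f)$ and $\bar\partial\colon\mathfrak c\to\mathfrak g$ the map induced by $\partial$. Then there is a natural isomorphism of Lie algebras $[\mathfrak c,\mathfrak c]\xrightarrow{\ \cong\ }\mathfrak g\curlywedge^q\mathfrak g$, $[c_1,c_2]\mapsto\bar\partial(c_1)\wedge\bar\partial(c_2)$.
   Context: All Lie algebras are over $\Lambda$. $\mathfrak r\#_q\mathfrak f$ is the $\Lambda$-submodule (an ideal) of $\mathfrak f$ generated by all $[r,f]$ and $qr'$ with $r,r'\in\mathfrak r$, $f\in\mathfrak f$. For $q\ge1$, the non-abelian $q$-exterior square $\mathfrak g\wedge^q\mathfrak g$ is the Lie algebra generated by symbols $h\wedge g$ and $\{h\}$ ($h,g\in\mathfrak g$) subject to, for all $h,h',g,g'\in\mathfrak g$, $\lambda,\lambda'\in\Lambda$: (1) $\lambda(h\wedge g)=\lambda h\wedge g=h\wedge\lambda g$; (2),(3) additivity in each variable; (4) $[h,h']\wedge g=h\wedge[h',g]-h'\wedge[h,g]$; (5) $h\wedge[g,g']=[g',h]\wedge g-[g,h]\wedge g'$; (6) $[h\wedge g,h'\wedge g']=[h,g]\wedge[h',g']$; (7) $[\{h'\},h\wedge g]=[qh',h]\wedge g+h\wedge[qh',g]$; (8)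 $\{\lambda h+\lambda'h'\}=\lambda\{h\}+\lambda'\{h'\}$; (9) $[\{h\},\{h'\}]=qh\wedge qh'$; (10) $\{[h,g]\}=q(h\wedge g)$; (11) $h\wedge h=0$. For $q=0$, generated by the $h\wedge g$ subject to (1)–(6) and (11). Ellis's exterior square $\mathfrak g\wedge\mathfrak g$ is generated by the $h\wedge g$ subject to (1)–(6) and (11), and $\mathfrak g\curlywedge^q\mathfrak g$ is the image of the natural homomorphism $\mathfrak g\wedge\mathfrak g\to\mathfrak g\wedge^q\mathfrak g$, $h\wedge g\mapsto h\wedge g$. *)

From HB Require Import structures.
From mathcomp Require Import all_boot all_algebra.
Set Implicit Arguments. Unset Strict Implicit. Unset Printing Implicit Defensive.
Import GRing.Theory.
Local Open Scope ring_scope.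

Record lieAlgebra (R : comPzRingType) := LieAlgebra {
  lie_car :> lmodType R;
  lie_br : lie_car -> lie_car -> lie_car;
  lie_brDl : forall x y z, lie_br (x + y) z = lie_br x z + lie_br y z;
  lie_brDr : forall x y z, lie_br x (y + z) = lie_br x y + lie_br x z;
  lie_brZl : forall (a : R) x y, lie_br (a *: x) y = a *: lie_br x y;
  lie_brZr : forall (a : R) x y, lie_br x (a *: y) = a *: lie_br x y;
  lie_br_alt : forall x, lie_br x x = 0;
  lie_jacobi : forall x y z,
    lie_br x (lie_br y z) + lie_br y (lie_br z x) + lie_br z (lie_br x y) = 0
}.
Arguments lie_br {R} l _ _.
Notation "[[ x , y ]]" := (lie_br _ x y) (format "[[ x ,  y ]]").

Definition lie_hom (R : comPzRingType) (L M : lieAlgebra R) (h : L -> M) : Prop :=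
  (forall (a : R) (x y : L), h (a *: x + y) = a *: h x + h y) /\
  (forall x y : L, h [[x, y]] = [[h x, h y]]).

Definition q_torsion_free (R : comPzRingType) (q : nat) : Prop :=
  (0 < q)%N -> forall x : R, q%:R * x = 0 -> x = 0.

Definition is_free_lie (R : comPzRingType) (F : lieAlgebra R) : Prop :=
  exists (X : Type) (i : X -> F),
    forall (L : lieAlgebra R) (phi : X -> L),
      exists! h : F -> L, lie_hom h /\ forall x, h (i x) = phi x.

Inductive lspan (R : comPzRingType) (V : lmodType R) (S : V -> Prop) : V -> Prop :=
  | lspan0 : lspan S 0
  | span_gen x : S x -> lspan S x
  | span_add x y : lspan S x -> lspan S y -> lspan S (x + y)
  | span_scale (a : R) x : lspan S x -> lspan S (a *: x).

(* r #_q f, where r = ker d for a homomorphism d : F -> G. *)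
Definition sharp_q (R : comPzRingType) (q : nat) (F G : lieAlgebra R)
    (d : F -> G) : F -> Prop :=
  lspan (fun z : F =>
          (exists r f : F, d r = 0 /\ z = [[r, f]]) \/
          (exists r' : F, d r' = 0 /\ z = (q%:R : R) *: r')).

(* Relations (1)-(11) of the q-exterior square (only (1)-(6),(11) if q = 0),
   for symbols  w h g  (= h /\ g)  and  b h  (= {h}). *)
Definition qext_rels (R : comPzRingType) (q : nat) (G L : lieAlgebra R)
    (w : G -> G -> L) (b : G -> L) : Prop :=
     (forall (a : R) h g, a *: w h g = w (a *: h) g /\ a *: w h g = w h (a *: g))
  /\ (forall h h' g, w (h + h') g = w h g + w h' g)
  /\ (forall h g g', w h (g + g') = w h g + w h g')
  /\ (forall h h' g, w [[h, h']] g = w h [[h', g]] - w h' [[h, g]])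
  /\ (forall h g g', w h [[g, g']] = w [[g', h]] g - w [[g, h]] g')
  /\ (forall h g h' g', [[w h g, w h' g']] = w [[h, g]] [[h', g']])
  /\ (forall h, w h h = 0)
  /\ ((0 < q)%N ->
        (forall h' h g, [[b h', w h g]] =
                        w [[(q%:R : R) *: h', h]] g + w h [[(q%:R : R) *: h', g]])
     /\ (forall (a a' : R) h h', b (a *: h + a' *: h') = a *: b h + a' *: b h')
     /\ (forall h h', [[b h, b h']] = w ((q%:R : R) *: h) ((q%:R : R) *: h'))
     /\ (forall h g, b [[h, g]] = (q%:R : R) *: w h g)).

(* (E, w, b) is the Lie algebra G /\^q G presented by the generators
   h /\ g, {h} (the latter only for q >= 1) and relations qext_rels:
   it satisfies the relations and is universal among Lie algebras with such
   elements. For q = 0 this is Ellis's exterior square G /\ G. *)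
Definition is_qext_square (R : comPzRingType) (q : nat) (G E : lieAlgebra R)
    (w : G -> G -> E) (b : G -> E) : Prop :=
  qext_rels q w b /\
  forall (L : lieAlgebra R) (w' : G -> G -> L) (b' : G -> L),
    qext_rels q w' b' ->
    exists! h : E -> L, [/\ lie_hom h, (forall x y, h (w x y) = w' x y) &
                            ((0 < q)%N -> forall x, h (b x) = b' x)].

(* Let D be the span of the brackets of F (representatives of [c, c]) and I
   the ideal r #_q f.  Relations (2)-(5) and (11) make (h, g) |-> h /\ g a
   2-cocycle, so (G /\^q G) x G with [(e, h), (e', g)] = (h /\ g, [h, g]) is a
   central extension of G.  Freeness of F lifts d through it, and the first
   component tau : F -> G /\^q G satisfies tau [x, y] = d x /\ d y; on D it is
   a Lie homomorphism with q tau x = {d x}.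
   An element of I is A + q r with d r = 0 and A a sum of brackets [r', f] with
   d r' = 0, so A lies in D and tau A = 0.  If A + q r lies in D, so does q r,
   hence so does r: modulo D, F is the free module on its generators, which
   has no q-torsion.  Then tau (q r) = {d r} = 0, so tau vanishes on the
   intersection of D and I.
   Conversely c satisfies the q-exterior relations with h /\ g := [s h, s g]
   and {h} := q s h for a section s of d; the induced map G /\^q G -> c
   inverts tau on D modulo I.  Finally tau (D) is the image of G /\ G, which is
   spanned by the h /\ g. *)

From HB Require Import structures.
From mathcomp Require Import all_boot all_algebra generic_quotient ring_quotient.
From mathcomp Require Import boolp functions.
Set Implicit Arguments. Unset Strict Implicit. Unset Printing Implicit Defensive.
Import GRing.Theory.
Local Open Scope ring_scope.
Local Open Scope quotient_scope.

Section LieAlgebraTheory.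
Variables (R : comPzRingType) (L : lieAlgebra R).
Implicit Types x y z : L.

Lemma lie_br0l x : [[0, x]] = 0.
Proof. by have := lie_brZl 0 0 x; rewrite !scale0r. Qed.

Lemma lie_br0r x : [[x, 0]] = 0.
Proof. by have := lie_brZr 0 x 0; rewrite !scale0r. Qed.

Lemma lie_brNl x y : [[- x, y]] = - [[x, y]].
Proof. by rewrite -scaleN1r lie_brZl scaleN1r. Qed.

Lemma lie_brNr x y : [[x, - y]] = - [[x, y]].
Proof. by rewrite -scaleN1r lie_brZr scaleN1r. Qed.

Lemma lie_brBl x y z : [[x - y, z]] = [[x, z]] - [[y, z]].
Proof. by rewrite lie_brDl lie_brNl. Qed.

Lemma lie_brBr x y z : [[x, y - z]] = [[x, y]] - [[x, z]].
Proof. by rewrite lie_brDr lie_brNr. Qed.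

Lemma lie_brC x y : [[x, y]] = - [[y, x]].
Proof.
have := lie_br_alt (x + y).
rewrite lie_brDl !lie_brDr !lie_br_alt add0r addr0 => /eqP.
by rewrite addr_eq0 => /eqP.
Qed.

Lemma lie_br_leibniz x y z : [[x, [[y, z]]]] = [[[[x, y]], z]] + [[y, [[x, z]]]].
Proof.
have := lie_jacobi x y z; rewrite (lie_brC z x) lie_brNr (lie_brC z).
by rewrite -addrA -opprD => /eqP; rewrite subr_eq0 addrC => /eqP.
Qed.

End LieAlgebraTheory.

Section LinearFunctions.
Variables (R : comPzRingType) (U V : lmodType R) (h : U -> V).
Hypothesis h_lin : linear h.

Lemma lin0 : h 0 = 0.
Proof.
have := h_lin 1 0 0; rewrite !scale1r addr0 => h0_double.
by apply: (addrI (h 0)); rewrite addr0 -h0_double.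
Qed.

Lemma linD x y : h (x + y) = h x + h y.
Proof. by have := h_lin 1 x y; rewrite !scale1r. Qed.

Lemma linZ a x : h (a *: x) = a *: h x.
Proof. by have := h_lin a x 0; rewrite !addr0 lin0 addr0. Qed.

Lemma linN x : h (- x) = - h x.
Proof. by rewrite -scaleN1r linZ scaleN1r. Qed.

Lemma linB x y : h (x - y) = h x - h y.
Proof. by rewrite linD linN. Qed.

End LinearFunctions.

Lemma lie_hom_br (R : comPzRingType) (L M : lieAlgebra R) (h : L -> M) :
  lie_hom h -> forall x y, h [[x, y]] = [[h x, h y]].
Proof. by case. Qed.

Lemma lie_hom_id (R : comPzRingType) (L : lieAlgebra R) : lie_hom (@id L).
Proof. by []. Qed.

Lemma lie_hom_comp (R : comPzRingType) (L M N : lieAlgebra R)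
    (f : L -> M) (g : M -> N) :
  lie_hom f -> lie_hom g -> lie_hom (g \o f).
Proof. by move=> [f_lin f_br] [g_lin g_br]; split=> *; rewrite /= (f_lin, f_br). Qed.

Lemma exists_unique_eq (T : Type) (P : T -> Prop) x y :
  (exists! z, P z) -> P x -> P y -> x = y.
Proof. by move=> [z [_ zP] ] Px Py; rewrite -(zP x Px) (zP y Py). Qed.

Section Span.
Variables (R : comPzRingType) (V : lmodType R) (S : V -> Prop).

Lemma lspanN x : lspan S x -> lspan S (- x).
Proof. by rewrite -scaleN1r; apply: span_scale. Qed.

Lemma lspanB x y : lspan S x -> lspan S y -> lspan S (x - y).
Proof. by move=> Sx Sy; apply/span_add/lspanN. Qed.

End Span.

Section AbelianLieAlgebra.
Variables (R : comPzRingType) (M : lmodType R).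

Definition abelian_br (x y : M) : M := 0.

Fact abelian_brDl x y z : abelian_br (x + y) z = abelian_br x z + abelian_br y z.
Proof. by rewrite /abelian_br addr0. Qed.
Fact abelian_brDr x y z : abelian_br x (y + z) = abelian_br x y + abelian_br x z.
Proof. by rewrite /abelian_br addr0. Qed.
Fact abelian_brZl a x y : abelian_br (a *: x) y = a *: abelian_br x y.
Proof. by rewrite /abelian_br scaler0. Qed.
Fact abelian_brZr a x y : abelian_br x (a *: y) = a *: abelian_br x y.
Proof. by rewrite /abelian_br scaler0. Qed.
Fact abelian_br_alt x : abelian_br x x = 0.
Proof. by []. Qed.
Fact abelian_jacobi x y z :
  abelian_br x (abelian_br y z) + abelian_br y (abelian_br z x)
  + abelian_br z (abelian_br x y) = 0.
Proof. by rewrite /abelian_br !addr0. Qed.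

Definition abelian_lie : lieAlgebra R :=
  LieAlgebra abelian_brDl abelian_brDr abelian_brZl abelian_brZr
    abelian_br_alt abelian_jacobi.

End AbelianLieAlgebra.

Record lie_subalgebra (R : comPzRingType) (L : lieAlgebra R) := LieSubalgebra {
  subalg_mem :> L -> Prop;
  subalg0 : subalg_mem 0;
  subalgD : forall x y, subalg_mem x -> subalg_mem y -> subalg_mem (x + y);
  subalgZ : forall a x, subalg_mem x -> subalg_mem (a *: x);
  subalg_closed_br : forall x y, subalg_mem x -> subalg_mem y -> subalg_mem [[x, y]]
}.

Section SubLieAlgebra.
Variables (R : comPzRingType) (L : lieAlgebra R) (S : lie_subalgebra L).

Definition subalg_pred : {pred L} := fun x => `[< S x >].

Fact subalg_submod_closed : submod_closed subalg_pred.
Proof.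
split=> [|a x y /asboolP Sx /asboolP Sy]; apply/asboolP; first exact: subalg0.
by apply/subalgD/Sy/subalgZ.
Qed.

HB.instance Definition _ :=
  GRing.isSubmodClosed.Build R L subalg_pred subalg_submod_closed.

Definition subalg_type := {x : L | x \in subalg_pred}.
HB.instance Definition _ := SubType.copy subalg_type {x : L | x \in subalg_pred}.
HB.instance Definition _ := [Choice of subalg_type by <:].
HB.instance Definition _ := [SubChoice_isSubLmodule of subalg_type by <:].

Lemma subalg_valP (u : subalg_type) : S (val u).
Proof. exact/asboolP/(valP u). Qed.

Fact subalg_br_subproof (u v : subalg_type) : [[val u, val v]] \in subalg_pred.
Proof. by apply/asboolP/subalg_closed_br; apply: subalg_valP. Qed.

Definition subalg_br (u v : subalg_type) : subalg_type :=
  Sub [[val u, val v]] (subalg_br_subproof u v).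

Fact subalg_brDl u v w : subalg_br (u + v) w = subalg_br u w + subalg_br v w.
Proof. by apply: val_inj; rewrite /= lie_brDl. Qed.
Fact subalg_brDr u v w : subalg_br u (v + w) = subalg_br u v + subalg_br u w.
Proof. by apply: val_inj; rewrite /= lie_brDr. Qed.
Fact subalg_brZl a u v : subalg_br (a *: u) v = a *: subalg_br u v.
Proof. by apply: val_inj; rewrite /= lie_brZl. Qed.
Fact subalg_brZr a u v : subalg_br u (a *: v) = a *: subalg_br u v.
Proof. by apply: val_inj; rewrite /= lie_brZr. Qed.
Fact subalg_br_alt u : subalg_br u u = 0.
Proof. by apply: val_inj; rewrite /= lie_br_alt. Qed.
Fact subalg_jacobi u v w :
  subalg_br u (subalg_br v w) + subalg_br v (subalg_br w u)
  + subalg_br w (subalg_br u v) = 0.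
Proof. by apply: val_inj; rewrite /= lie_jacobi. Qed.

Definition sub_lie : lieAlgebra R :=
  LieAlgebra subalg_brDl subalg_brDr subalg_brZl subalg_brZr
    subalg_br_alt subalg_jacobi.

Lemma sub_lie_val_hom : lie_hom (val : sub_lie -> L).
Proof. by []. Qed.

End SubLieAlgebra.

Record lie_ideal (R : comPzRingType) (L : lieAlgebra R) := LieIdeal {
  ideal_mem :> L -> Prop;
  ideal0 : ideal_mem 0;
  idealD : forall x y, ideal_mem x -> ideal_mem y -> ideal_mem (x + y);
  idealZ : forall a x, ideal_mem x -> ideal_mem (a *: x);
  ideal_closed_br : forall x y, ideal_mem y -> ideal_mem [[x, y]]
}.

Section QuotientLieAlgebra.
Variables (R : comPzRingType) (L : lieAlgebra R) (J : lie_ideal L).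

Lemma ideal_closed_brl x y : J x -> J [[x, y]].
Proof. by move=> Jx; rewrite lie_brC -scaleN1r; apply/idealZ/ideal_closed_br. Qed.

Definition ideal_pred : {pred L} := fun x => `[< J x >].

Fact ideal_zmod_closed : zmod_closed ideal_pred.
Proof.
split=> [|x y /asboolP Jx /asboolP Jy]; apply/asboolP; first exact: ideal0.
by apply: idealD => //; rewrite -scaleN1r; apply: idealZ.
Qed.

HB.instance Definition _ :=
  GRing.isZmodClosed.Build L ideal_pred ideal_zmod_closed.

Local Notation quot_type := (Quotient.quot ideal_pred).

Lemma quot_pi_eq x y : \pi_quot_type x = \pi y <-> J (x - y).
Proof.
split=> [/eqP|Jxy]; first by rewrite -Quotient.idealrBE => /asboolP.
by apply/eqP; rewrite -Quotient.idealrBE; apply/asboolP.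
Qed.

Lemma quot_pi_repr x : J (repr (\pi_quot_type x) - x).
Proof. by apply/quot_pi_eq; rewrite reprK. Qed.

Definition quot_scale a (u : quot_type) : quot_type := \pi_quot_type (a *: repr u).

Lemma quot_scale_pi a x : quot_scale a (\pi x) = \pi_quot_type (a *: x).
Proof. by apply/quot_pi_eq; rewrite -scalerBr; apply/idealZ/quot_pi_repr. Qed.

Fact quot_scaleA a b u : quot_scale a (quot_scale b u) = quot_scale (a * b) u.
Proof. by elim/quotW: u => x; rewrite !quot_scale_pi scalerA. Qed.
Fact quot_scale1 : left_id 1 quot_scale.
Proof. by elim/quotW => x; rewrite quot_scale_pi scale1r. Qed.
Fact quot_scaleDr : right_distributive quot_scale +%R.
Proof.
by move=> a; elim/quotW => x; elim/quotW => y;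
  rewrite -raddfD !quot_scale_pi scalerDr raddfD.
Qed.
Fact quot_scaleDl u : {morph quot_scale^~ u : a b / a + b}.
Proof. by elim/quotW: u => x a b; rewrite !quot_scale_pi scalerDl raddfD. Qed.

HB.instance Definition _ := GRing.Zmodule_isLmodule.Build R quot_type
  quot_scaleA quot_scale1 quot_scaleDr quot_scaleDl.

Lemma quot_piZ a x : \pi_quot_type (a *: x) = a *: \pi_quot_type x.
Proof. by rewrite -quot_scale_pi. Qed.

Definition quot_br (u v : quot_type) : quot_type := \pi_quot_type [[repr u, repr v]].

Lemma quot_br_pi x y : quot_br (\pi x) (\pi y) = \pi_quot_type [[x, y]].
Proof.
apply/quot_pi_eq; set x' := repr _; set y' := repr _.
have -> : [[x', y']] - [[x, y]] = [[x' - x, y']] + [[x, y' - y]].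
  by rewrite lie_brBl lie_brBr addrA subrK.
by apply: idealD; [apply: ideal_closed_brl | apply: ideal_closed_br];
  apply: quot_pi_repr.
Qed.

Fact quot_brDl u v w : quot_br (u + v) w = quot_br u w + quot_br v w.
Proof.
by elim/quotW: u => x; elim/quotW: v => y; elim/quotW: w => z;
  rewrite -raddfD !quot_br_pi lie_brDl raddfD.
Qed.
Fact quot_brDr u v w : quot_br u (v + w) = quot_br u v + quot_br u w.
Proof.
by elim/quotW: u => x; elim/quotW: v => y; elim/quotW: w => z;
  rewrite -raddfD !quot_br_pi lie_brDr raddfD.
Qed.
Fact quot_brZl a u v : quot_br (a *: u) v = a *: quot_br u v.
Proof.
by elim/quotW: u => x; elim/quotW: v => y;
  rewrite -quot_piZ !quot_br_pi lie_brZl quot_piZ.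
Qed.
Fact quot_brZr a u v : quot_br u (a *: v) = a *: quot_br u v.
Proof.
by elim/quotW: u => x; elim/quotW: v => y;
  rewrite -quot_piZ !quot_br_pi lie_brZr quot_piZ.
Qed.
Fact quot_br_alt u : quot_br u u = 0.
Proof. by elim/quotW: u => x; rewrite quot_br_pi lie_br_alt raddf0. Qed.
Fact quot_jacobi u v w :
  quot_br u (quot_br v w) + quot_br v (quot_br w u) + quot_br w (quot_br u v) = 0.
Proof.
by elim/quotW: u => x; elim/quotW: v => y; elim/quotW: w => z;
  rewrite !quot_br_pi -!raddfD lie_jacobi raddf0.
Qed.

Definition quot_lie : lieAlgebra R :=
  LieAlgebra quot_brDl quot_brDr quot_brZl quot_brZr quot_br_alt quot_jacobi.

Definition lie_quot_pi : L -> quot_lie := \pi_quot_type.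

Lemma lie_quot_pi_hom : lie_hom lie_quot_pi.
Proof.
rewrite /lie_quot_pi; split=> [a x y|x y]; last by rewrite /= quot_br_pi.
by rewrite -quot_piZ raddfD.
Qed.

Lemma lie_quot_pi_eq x y : lie_quot_pi x = lie_quot_pi y <-> J (x - y).
Proof. exact: quot_pi_eq. Qed.

End QuotientLieAlgebra.

Lemma formal_comb_eq0 (R : comPzRingType) (M : lmodType R) (X : eqType)
    (g : X -> M) (s : seq (R * X)) :
  (forall y, \sum_(p <- s | p.2 == y) p.1 = 0) -> \sum_(p <- s) p.1 *: g p.2 = 0.
Proof.
have [n] := ubnP (size s); elim: n s => // n IH [|[a y] s] /= size_s coef0.
  by rewrite big_nil.
rewrite big_cons (bigID (fun p => p.2 == y)) /= addrA.
have -> : \sum_(p <- s | p.2 == y) p.1 *: g p.2 = (\sum_(p <- s | p.2 == y) p.1) *: g y.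
  by rewrite scaler_suml; apply: eq_bigr => p /eqP ->.
rewrite -scalerDl; have := coef0 y; rewrite big_cons /= eqxx => ->.
rewrite scale0r add0r -big_filter.
apply: IH => [|y']; first by rewrite size_filter (leq_ltn_trans (count_size _ _)).
rewrite big_filter_cond; have [->|y'_ne_y] := eqVneq y' y.
  by rewrite big_pred0 // => p; rewrite andNb.
rewrite (eq_bigl (fun p => p.2 == y')) => [|p].
  by have := coef0 y'; rewrite big_cons /= eq_sym (negPf y'_ne_y).
by have [->|] := eqVneq p.2 y'; rewrite ?y'_ne_y ?andbF.
Qed.

Definition derived_span (R : comPzRingType) (L : lieAlgebra R) : L -> Prop :=
  lspan (fun z : L => exists x y : L, z = [[x, y]]).

Definition free_lie_basis (R : comPzRingType) (F : lieAlgebra R) (X : Type)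
    (i : X -> F) : Prop :=
  forall (L : lieAlgebra R) (phi : X -> L),
    exists! h : F -> L, lie_hom h /\ forall x, h (i x) = phi x.

Section FreeLieAlgebra.
Variables (R : comPzRingType) (F : lieAlgebra R) (X : Type) (i : X -> F).
Hypothesis i_basis : free_lie_basis i.

Lemma free_lie_hom_ext (L : lieAlgebra R) (h1 h2 : F -> L) :
  lie_hom h1 -> lie_hom h2 -> (forall x, h1 (i x) = h2 (i x)) -> h1 = h2.
Proof. by move=> h1_hom h2_hom h12; apply: (exists_unique_eq (i_basis (h2 \o i))). Qed.

Lemma free_lie_ind (S : lie_subalgebra F) : (forall x, S (i x)) -> forall z, S z.
Proof.
move=> S_i; have S_i_mem x : i x \in subalg_pred S by apply/asboolP.
have [j [ [j_hom j_i] _] ] := i_basis (fun x => Sub (i x) (S_i_mem x) : sub_lie S).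
have val_j : val \o j = id.
  apply: free_lie_hom_ext => [||x]; last by rewrite /= j_i.
    exact: lie_hom_comp j_hom (sub_lie_val_hom S).
  exact: lie_hom_id.
by move=> z; rewrite -[z]/(id z) -val_j; apply: subalg_valP.
Qed.

Local Notation X' := {classic X}.

Definition lin_comb (s : seq (R * X')) : F := \sum_(p <- s) p.1 *: i p.2.

Lemma derived_span_lin_comb z : exists s, derived_span (z - lin_comb s).
Proof.
pose P z := exists s, derived_span (z - lin_comb s).
have P0 : P 0 by exists [::]; rewrite /lin_comb big_nil subr0; apply: lspan0.
have PD x y : P x -> P y -> P (x + y).
  move=> [s Ds] [t Dt]; exists (s ++ t); rewrite /lin_comb big_cat /= opprD addrACA.
  exact: span_add.
have PZ a x : P x -> P (a *: x).
  move=> [s Ds]; exists [seq (a * p.1, p.2) | p <- s].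
  rewrite /lin_comb big_map -[X in _ - X]/(\sum_(p <- s) (a * p.1) *: i p.2).
  under eq_bigr do rewrite -scalerA.
  by rewrite -scaler_sumr -scalerBr; apply: span_scale.
have Pbr x y : P x -> P y -> P [[x, y]].
  move=> _ _; exists [::]; rewrite /lin_comb big_nil subr0.
  by apply: span_gen; exists x, y.
apply: (@free_lie_ind (LieSubalgebra P0 PD PZ Pbr) _ z) => x /=.
by exists [:: (1, x)]; rewrite /lin_comb big_seq1 scale1r subrr; apply: lspan0.
Qed.

Lemma derived_span_qZK (q : nat) (r : F) :
  q_torsion_free R q -> (0 < q)%N ->
  derived_span ((q%:R : R) *: r) -> derived_span r.
Proof.
move=> q_tf q_gt0 Dqr; have [s Ds] := derived_span_lin_comb r.
pose delta (x : X') : abelian_lie (X' -> R^o) := fun y => (x == y)%:R.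
have [alpha [ [ [alpha_lin alpha_br] alpha_i] _] ] := i_basis delta.
have alpha_derived z : derived_span z -> alpha z = 0.
  elim=> [|_ [x [y ->] ]|x y _ ax _ ay|a x _ ax]; first exact: lin0.
  - by rewrite alpha_br.
  - by rewrite linD // ax ay addr0.
  - by rewrite linZ // ax scaler0.
have alpha_comb y : alpha (lin_comb s) y = \sum_(p <- s | p.2 == y) p.1.
  rewrite /lin_comb; elim: s {Ds} => [|[a x] s IH].
    by rewrite !big_nil lin0.
  rewrite !big_cons linD // linZ // !fctE /= IH alpha_i /delta.
  by case: eqP => _; rewrite -[a *: _]/(a * _) ?mulr1 ?mulr0 ?add0r.
have coef0 y : \sum_(p <- s | p.2 == y) p.1 = 0.
  apply: (q_tf q_gt0); rewrite -alpha_comb.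
  have := alpha_derived _ Dqr; rewrite linZ // -[r](subrK (lin_comb s)).
  by rewrite linD // alpha_derived // add0r => /(congr1 (fun f => f y)).
by move: Ds; rewrite /lin_comb formal_comb_eq0 // subr0.
Qed.

End FreeLieAlgebra.

Section QextRelations.
Variables (R : comPzRingType) (q : nat) (G E : lieAlgebra R).
Variables (w : G -> G -> E) (b : G -> E).
Hypothesis rels : qext_rels q w b.

Lemma qext_wZl a h g : w (a *: h) g = a *: w h g.
Proof. by case: rels => /(_ a h g) [-> _]. Qed.

Lemma qext_wZr a h g : w h (a *: g) = a *: w h g.
Proof. by case: rels => /(_ a h g) [_ ->]. Qed.

Lemma qext_wDl h h' g : w (h + h') g = w h g + w h' g.
Proof. by case: rels => _ []. Qed.

Lemma qext_wDr h g g' : w h (g + g') = w h g + w h g'.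
Proof. by case: rels => _ [_ [] ]. Qed.

Lemma qext_w_brl h h' g : w [[h, h']] g = w h [[h', g]] - w h' [[h, g]].
Proof. by case: rels => _ [_ [_ [] ] ]. Qed.

Lemma qext_w_brr h g g' : w h [[g, g']] = w [[g', h]] g - w [[g, h]] g'.
Proof. by case: rels => _ [_ [_ [_ [] ] ] ]. Qed.

Lemma qext_w_br h g h' g' : [[w h g, w h' g']] = w [[h, g]] [[h', g']].
Proof. by case: rels => _ [_ [_ [_ [_ [] ] ] ] ]. Qed.

Lemma qext_w_alt h : w h h = 0.
Proof. by case: rels => _ [_ [_ [_ [_ [_ [] ] ] ] ] ]. Qed.

Lemma qext_w0l g : w 0 g = 0.
Proof. by rewrite -(scale0r 0) qext_wZl scale0r. Qed.

Lemma qext_w0r h : w h 0 = 0.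
Proof. by rewrite -(scale0r 0) qext_wZr scale0r. Qed.

Lemma qext_wNr h g : w h (- g) = - w h g.
Proof. by rewrite -scaleN1r qext_wZr scaleN1r. Qed.

Lemma qext_wC h g : w h g = - w g h.
Proof.
have := qext_w_alt (h + g).
rewrite qext_wDl !qext_wDr !qext_w_alt add0r addr0 => /eqP.
by rewrite addr_eq0 => /eqP.
Qed.

Lemma qext_w_cocycle x y z : w x [[y, z]] + w y [[z, x]] + w z [[x, y]] = 0.
Proof.
by rewrite (qext_wC z) qext_w_brl (lie_brC z x) qext_wNr opprB addrA subrK subrr.
Qed.

Hypothesis q_gt0 : (0 < q)%N.

Lemma qext_b_lin : linear b.
Proof.
case: rels => _ [_ [_ [_ [_ [_ [_ /(_ q_gt0) [_ [b_lin _] ] ] ] ] ] ] ] a h h'.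
by rewrite -[h' in LHS]scale1r b_lin scale1r.
Qed.

Lemma qext_b_br h g : b [[h, g]] = (q%:R : R) *: w h g.
Proof. by case: rels => _ [_ [_ [_ [_ [_ [_ /(_ q_gt0) [_ [_ [] ] ] ] ] ] ] ] ]. Qed.

End QextRelations.

Section CentralExtension.
Variables (R : comPzRingType) (G : lieAlgebra R) (V : lmodType R).
Variable c : G -> G -> V.
Hypotheses (cDl : forall x x' y, c (x + x') y = c x y + c x' y)
           (cDr : forall x y y', c x (y + y') = c x y + c x y')
           (cZl : forall a x y, c (a *: x) y = a *: c x y)
           (cZr : forall a x y, c x (a *: y) = a *: c x y)
           (c_alt : forall x, c x x = 0)
           (c_cocycle : forall x y z, c x [[y, z]] + c y [[z, x]] + c z [[x, y]] = 0).

Definition cext_br (u v : V * G) : V * G := (c u.2 v.2, [[u.2, v.2]]).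

Fact cext_brDl u v t : cext_br (u + v) t = cext_br u t + cext_br v t.
Proof. by rewrite /cext_br /= cDl lie_brDl. Qed.
Fact cext_brDr u v t : cext_br u (v + t) = cext_br u v + cext_br u t.
Proof. by rewrite /cext_br /= cDr lie_brDr. Qed.
Fact cext_brZl a u v : cext_br (a *: u) v = a *: cext_br u v.
Proof. by rewrite /cext_br /= cZl lie_brZl. Qed.
Fact cext_brZr a u v : cext_br u (a *: v) = a *: cext_br u v.
Proof. by rewrite /cext_br /= cZr lie_brZr. Qed.
Fact cext_br_alt u : cext_br u u = 0.
Proof. by rewrite /cext_br c_alt lie_br_alt. Qed.
Fact cext_jacobi u v t :
  cext_br u (cext_br v t) + cext_br v (cext_br t u) + cext_br t (cext_br u v) = 0.
Proof. by rewrite /cext_br /=; congr (_, _); [apply: c_cocycle | apply: lie_jacobi]. Qed.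

Definition cext_lie : lieAlgebra R :=
  LieAlgebra cext_brDl cext_brDr cext_brZl cext_brZr cext_br_alt cext_jacobi.

Lemma cext_snd_hom : lie_hom (snd : cext_lie -> G).
Proof. by []. Qed.

End CentralExtension.

Section ExteriorSquareSpan.
Variables (R : comPzRingType) (G E : lieAlgebra R) (w : G -> G -> E) (b : G -> E).
Hypothesis E_square : is_qext_square 0 w b.

Let rels : qext_rels 0 w b := proj1 E_square.

Definition wedge_span : E -> Prop := lspan (fun e : E => exists h g, e = w h g).

Lemma wedge_span_br e e' : wedge_span e -> wedge_span e' -> wedge_span [[e, e']].
Proof.
move=> We We'; elim: We => [|_ [h [g ->] ]|e1 e2 _ IH1 _ IH2|a e1 _ IH].
- by rewrite lie_br0l; apply: lspan0.
- elim: We' => [|_ [h' [g' ->] ]|e1 e2 _ IH1 _ IH2|a e1 _ IH].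
  + by rewrite lie_br0r; apply: lspan0.
  + by rewrite (qext_w_br rels); apply: span_gen; exists [[h, g]], [[h', g']].
  + by rewrite lie_brDr; apply: span_add.
  + by rewrite lie_brZr; apply: span_scale.
- by rewrite lie_brDl; apply: span_add.
- by rewrite lie_brZl; apply: span_scale.
Qed.

Definition wedge_subalgebra : lie_subalgebra E :=
  LieSubalgebra (lspan0 _) (@span_add _ _ _) (@span_scale _ _ _) wedge_span_br.

Let wedge_in h g : w h g \in subalg_pred wedge_subalgebra.
Proof. by apply/asboolP/span_gen; exists h, g. Qed.

Let w_sub h g : sub_lie wedge_subalgebra := Sub (w h g) (wedge_in h g).

Let sub_qext_rels : qext_rels 0 w_sub (fun=> 0).
Proof.
split; [|split; [|split; [|split; [|split; [|split; [|split] ] ] ] ] ] => //.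
- by move=> a h g; split; apply: val_inj; rewrite /= ?(qext_wZl rels) ?(qext_wZr rels).
- by move=> h h' g; apply: val_inj; rewrite /= (qext_wDl rels).
- by move=> h g g'; apply: val_inj; rewrite /= (qext_wDr rels).
- by move=> h h' g; apply: val_inj; rewrite /= (qext_w_brl rels).
- by move=> h g g'; apply: val_inj; rewrite /= (qext_w_brr rels).
- by move=> h g h' g'; apply: val_inj; rewrite /= (qext_w_br rels).
- by move=> h; apply: val_inj; rewrite /= (qext_w_alt rels).
Qed.

Lemma ext_square_spanned e : wedge_span e.
Proof.
have [j [ [j_hom j_w _] _] ] := proj2 E_square _ _ _ sub_qext_rels.
have val_j : val \o j = id.
  apply: (exists_unique_eq (proj2 E_square _ _ _ rels)); split=> //.
  - exact: lie_hom_comp j_hom (sub_lie_val_hom _).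
  - by move=> h g; rewrite /= j_w.
by rewrite -[e]/(id e) -val_j; exact: (subalg_valP (j e)).
Qed.

End ExteriorSquareSpan.

Section Presentation.
Variables (R : comPzRingType) (q : nat) (G F : lieAlgebra R) (d : F -> G).
Hypothesis d_hom : lie_hom d.

Let d_lin : linear d := proj1 d_hom.

Lemma sharp_q_closed_br x y : sharp_q q d y -> sharp_q q d [[x, y]].
Proof.
elim=> [|z z_gen|z z' _ Iz _ Iz'|a z _ Iz].
- by rewrite lie_br0r; apply: lspan0.
- have dz : d z = 0.
    case: z_gen => [ [r [f [dr ->] ] ]|[r [dr ->] ] ].
      by rewrite (lie_hom_br d_hom) dr lie_br0l.
    by rewrite linZ // dr scaler0.
  apply: span_gen; left; exists (- z), x; split; first by rewrite linN // dz oppr0.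
  by rewrite lie_brNl -lie_brC.
- by rewrite lie_brDr; apply: span_add.
- by rewrite lie_brZr; apply: span_scale.
Qed.

Definition sharp_q_ideal : lie_ideal F :=
  LieIdeal (lspan0 _) (@span_add _ _ _) (@span_scale _ _ _) sharp_q_closed_br.

Definition ker_brackets : F -> Prop :=
  lspan (fun z : F => exists r f : F, d r = 0 /\ z = [[r, f]]).

Lemma sharp_q_decomp z : sharp_q q d z ->
  exists A r, [/\ ker_brackets A, d r = 0 & z = A + (q%:R : R) *: r].
Proof.
elim=> [|_ [ [r [f [dr ->] ] ]|[r [dr ->] ] ]|z1 z2 _ [A1 [r1 [A1_ker dr1 ->] ] ]
          _ [A2 [r2 [A2_ker dr2 ->] ] ]|a z0 _ [A [r [A_ker dr ->] ] ] ].
- by exists 0, 0; rewrite scaler0 addr0 lin0 //; split=> //; apply: lspan0.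
- exists [[r, f]], 0; rewrite scaler0 addr0 lin0 //; split=> //.
  by apply: span_gen; exists r, f.
- by exists 0, r; rewrite add0r; split=> //; apply: lspan0.
- exists (A1 + A2), (r1 + r2); rewrite linD // dr1 dr2 addr0 scalerDr addrACA.
  by split=> //; apply: span_add.
- exists (a *: A), (a *: r); rewrite linZ // dr scaler0 scalerDr !scalerA mulrC.
  by split=> //; apply: span_scale.
Qed.

Lemma sharp_q_br_ker r f : d r = 0 -> sharp_q q d [[r, f]].
Proof. by move=> dr; apply: span_gen; left; exists r, f. Qed.

Lemma sharp_q_qZ_ker r : d r = 0 -> sharp_q q d ((q%:R : R) *: r).
Proof. by move=> dr; apply: span_gen; right; exists r. Qed.

Variables (s : G -> F) (sK : cancel s d).

Let pi := lie_quot_pi sharp_q_ideal.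
Let pi_lin : linear pi := proj1 (lie_quot_pi_hom sharp_q_ideal).
Let pi_br : forall x y, pi [[x, y]] = [[pi x, pi y]] :=
  proj2 (lie_quot_pi_hom sharp_q_ideal).

Let c_wedge h g := pi [[s h, s g]].
Let c_brace h := pi ((q%:R : R) *: s h).

Let s_d_ker x : d (s (d x) - x) = 0.
Proof. by rewrite linB // sK subrr. Qed.

Lemma c_wedge_d x y : c_wedge (d x) (d y) = pi [[x, y]].
Proof.
apply/lie_quot_pi_eq.
have -> : [[s (d x), s (d y)]] - [[x, y]] =
          [[s (d x) - x, s (d y)]] + [[x, s (d y) - y]].
  by rewrite lie_brBl lie_brBr addrA subrK.
apply: span_add; first exact: sharp_q_br_ker (s_d_ker x).
by rewrite lie_brC; apply/lspanN/sharp_q_br_ker/s_d_ker.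
Qed.

Lemma c_brace_d x : c_brace (d x) = pi ((q%:R : R) *: x).
Proof. by apply/lie_quot_pi_eq; rewrite -scalerBr; apply/sharp_q_qZ_ker/s_d_ker. Qed.

Lemma c_qext_rels : qext_rels q c_wedge c_brace.
Proof.
have lift h : exists x, d x = h by exists (s h).
split; [|split; [|split; [|split; [|split; [|split; [|split] ] ] ] ] ].
- move=> a h g; case: (lift h) (lift g) => x <- [y <-].
  by split; rewrite -(linZ d_lin) !c_wedge_d -(linZ pi_lin) ?lie_brZl ?lie_brZr.
- move=> h h' g; case: (lift h) (lift h') (lift g) => x <- [x' <-] [y <-].
  by rewrite -(linD d_lin) !c_wedge_d lie_brDl (linD pi_lin).
- move=> h g g'; case: (lift h) (lift g) (lift g') => x <- [y <-] [y' <-].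
  by rewrite -(linD d_lin) !c_wedge_d lie_brDr (linD pi_lin).
- move=> h h' g; case: (lift h) (lift h') (lift g) => x <- [x' <-] [y <-].
  by rewrite -!(lie_hom_br d_hom) !c_wedge_d -(linB pi_lin) lie_br_leibniz addrK.
- move=> h g g'; case: (lift h) (lift g) (lift g') => x <- [y <-] [y' <-].
  rewrite -!(lie_hom_br d_hom) !c_wedge_d -(linB pi_lin) (lie_brC y' x) (lie_brC y x).
  by rewrite !lie_brNl opprK lie_br_leibniz (lie_brC y) addrC.
- move=> h g h' g'.
  case: (lift h) (lift g) (lift h') (lift g') => x <- [y <-] [x' <-] [y' <-].
  by rewrite -!(lie_hom_br d_hom) !c_wedge_d -pi_br.
- by move=> h; case: (lift h) => x <-; rewrite c_wedge_d lie_br_alt (lin0 pi_lin).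
- move=> _; split; [|split; [|split] ].
- move=> h' h g; case: (lift h') (lift h) (lift g) => x' <- [x <-] [y <-].
  rewrite c_brace_d -!(linZ d_lin) -!(lie_hom_br d_hom) !c_wedge_d -pi_br -(linD pi_lin).
  by rewrite lie_br_leibniz.
- move=> a a' h h'; case: (lift h) (lift h') => x <- [x' <-].
  rewrite -!(linZ d_lin) -(linD d_lin) !c_brace_d -!(linZ pi_lin) -(linD pi_lin).
  by rewrite scalerDr !scalerA (mulrC a) (mulrC a').
- move=> h h'; case: (lift h) (lift h') => x <- [x' <-].
  by rewrite !c_brace_d -pi_br -!(linZ d_lin) c_wedge_d.
- move=> h g; case: (lift h) (lift g) => x <- [y <-].
  by rewrite -(lie_hom_br d_hom) c_brace_d c_wedge_d (linZ pi_lin).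
Qed.

Variables (X : Type) (i : X -> F) (i_basis : free_lie_basis i).
Variables (E : lieAlgebra R) (w : G -> G -> E) (b : G -> E).
Hypothesis E_square : is_qext_square q w b.

Let rels : qext_rels q w b := proj1 E_square.

Lemma exists_tau :
  exists tau : F -> E, linear tau /\ forall x y, tau [[x, y]] = w (d x) (d y).
Proof.
pose C := cext_lie (qext_wDl rels) (qext_wDr rels) (qext_wZl rels) (qext_wZr rels)
  (qext_w_alt rels) (qext_w_cocycle rels).
have [Phi [ [ [Phi_lin Phi_br] Phi_i] _] ] := i_basis (fun x => (0, d (i x)) : C).
have snd_Phi : snd \o Phi = d.
  apply: (free_lie_hom_ext i_basis) => [||x]; last by rewrite /= Phi_i.
    exact: lie_hom_comp (conj Phi_lin Phi_br) (cext_snd_hom _ _ _ _ _ _).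
  exact: d_hom.
exists (fst \o Phi); split=> [a x y|x y]; first by rewrite /= Phi_lin.
by rewrite /= Phi_br /= -!(congr1 (fun f => f _) snd_Phi).
Qed.

Variables (tau : F -> E) (tau_lin : linear tau).
Hypothesis tau_br : forall x y, tau [[x, y]] = w (d x) (d y).

Lemma tau_br_derived x y :
  derived_span x -> derived_span y -> [[tau x, tau y]] = tau [[x, y]].
Proof.
rewrite tau_br => Dx Dy; elim: Dx => [|_ [u [v ->] ]|x1 x2 _ IH1 _ IH2|a x1 _ IH].
- by rewrite lin0 // lie_br0l lin0 // (qext_w0l rels).
- rewrite tau_br (lie_hom_br d_hom).
  elim: Dy => [|_ [u' [v' ->] ]|y1 y2 _ IH1 _ IH2|a y1 _ IH].
  + by rewrite lin0 // lie_br0r lin0 // (qext_w0r rels).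
  + by rewrite tau_br (qext_w_br rels) (lie_hom_br d_hom).
  + by rewrite linD // lie_brDr IH1 IH2 linD // (qext_wDr rels).
  + by rewrite linZ // lie_brZr IH linZ // (qext_wZr rels).
- by rewrite linD // lie_brDl IH1 IH2 linD // (qext_wDl rels).
- by rewrite linZ // lie_brZl IH linZ // (qext_wZl rels).
Qed.

Lemma tau_qZ_derived x :
  (0 < q)%N -> derived_span x -> (q%:R : R) *: tau x = b (d x).
Proof.
move=> q_gt0 Dx; have b_lin := qext_b_lin rels q_gt0.
elim: Dx => [|_ [u [v ->] ]|x1 x2 _ IH1 _ IH2|a x1 _ IH].
- by rewrite (lin0 tau_lin) (lin0 d_lin) (lin0 b_lin) scaler0.
- by rewrite tau_br (lie_hom_br d_hom) (qext_b_br rels).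
- by rewrite (linD tau_lin) scalerDr IH1 IH2 (linD d_lin) (linD b_lin).
- by rewrite (linZ tau_lin) scalerA mulrC -scalerA IH (linZ d_lin) (linZ b_lin).
Qed.

Lemma tau_sharp_derived z :
  q_torsion_free R q -> derived_span z -> sharp_q q d z -> tau z = 0.
Proof.
move=> q_tf Dz /sharp_q_decomp [A [r [A_ker dr z_eq] ] ]; rewrite z_eq in Dz *.
have [tauA DA] : tau A = 0 /\ derived_span A.
  elim: A_ker => [|_ [r0 [f [dr0 ->] ] ]|A1 A2 _ [t1 D1] _ [t2 D2]|a A1 _ [t1 D1] ].
  - by rewrite lin0 //; split=> //; apply: lspan0.
  - by rewrite tau_br dr0 (qext_w0l rels); split=> //; apply: span_gen; exists r0, f.
  - by rewrite linD // t1 t2 addr0; split=> //; apply: span_add.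
  - by rewrite linZ // t1 scaler0; split=> //; apply: span_scale.
rewrite linD // tauA add0r.
have [->|q_gt0] := posnP q; first by rewrite scale0r lin0.
have Dqr : derived_span ((q%:R : R) *: r).
  by rewrite -(addKr A (_ *: r)) addrC; exact: lspanB.
have Dr := derived_span_qZK i_basis q_tf q_gt0 Dqr.
by rewrite linZ // tau_qZ_derived // dr (lin0 (qext_b_lin rels q_gt0)).
Qed.

Lemma tau_eq_sharp x y :
  derived_span x -> derived_span y -> tau x = tau y -> sharp_q q d (x - y).
Proof.
have [psi [ [ [psi_lin _] psi_w _] _] ] := proj2 E_square _ _ _ c_qext_rels.
have psi_tau z : derived_span z -> psi (tau z) = pi z.
  elim=> [|_ [u [v ->] ]|z1 z2 _ IH1 _ IH2|a z1 _ IH].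
  - by rewrite (lin0 tau_lin) (lin0 psi_lin) (lin0 pi_lin).
  - by rewrite tau_br psi_w c_wedge_d.
  - by rewrite (linD tau_lin) (linD psi_lin) IH1 IH2 (linD pi_lin).
  - by rewrite (linZ tau_lin) (linZ psi_lin) IH (linZ pi_lin).
by move=> Dx Dy /(congr1 psi); rewrite !psi_tau // => /lie_quot_pi_eq.
Qed.

Variables (E0 : lieAlgebra R) (w0 : G -> G -> E0) (phi : E0 -> E).
Hypotheses (phi_lin : linear phi) (phi_w : forall h g, phi (w0 h g) = w h g).

Lemma tau_derived_in_image x : derived_span x -> exists e0, phi e0 = tau x.
Proof.
elim=> [|_ [u [v ->] ]|x1 x2 _ [e1 E1] _ [e2 E2]|a x1 _ [e Ee] ].
- by exists 0; rewrite (lin0 phi_lin) (lin0 tau_lin).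
- by exists (w0 (d u) (d v)); rewrite tau_br phi_w.
- by exists (e1 + e2); rewrite (linD phi_lin) (linD tau_lin) E1 E2.
- by exists (a *: e); rewrite (linZ phi_lin) (linZ tau_lin) Ee.
Qed.

Lemma image_in_tau_derived (b0 : G -> E0) (E0_square : is_qext_square 0 w0 b0) e0 :
  exists2 x, derived_span x & tau x = phi e0.
Proof.
elim: (ext_square_spanned E0_square e0)
  => [|_ [h [g ->] ]|e1 e2 _ [x1 D1 E1] _ [x2 D2 E2]|a e _ [x Dx Ex] ].
- by exists 0; [apply: lspan0 | rewrite (lin0 phi_lin) (lin0 tau_lin)].
- exists [[s h, s g]]; first by apply: span_gen; exists (s h), (s g).
  by rewrite tau_br !sK phi_w.
- by exists (x1 + x2); [apply: span_add | rewrite (linD phi_lin) (linD tau_lin) E1 E2].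
- by exists (a *: x); [apply: span_scale | rewrite (linZ phi_lin) (linZ tau_lin) Ex].
Qed.

End Presentation.

Unset Implicit Arguments.

Theorem lemma6p4 (R : comPzRingType) (q : nat) (Htf : q_torsion_free R q)
    (G F : lieAlgebra R) (d : F -> G)
    (Ffree : is_free_lie F) (dhom : lie_hom d) (dsurj : forall g : G, exists f, d f = g)
    (* E = G /\^q G *)
    (E : lieAlgebra R) (w : G -> G -> E) (b : G -> E)
    (HE : is_qext_square q w b)
    (* E0 = G /\ G (Ellis) and the natural homomorphism phi : E0 -> E *)
    (E0 : lieAlgebra R) (w0 : G -> G -> E0) (b0 : G -> E0)
    (HE0 : is_qext_square 0 w0 b0)
    (phi : E0 -> E) (phihom : lie_hom phi)
    (phiw : forall h g, phi (w0 h g) = w h g) :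
  let I := sharp_q q d in
  (* representatives in F of the elements of [c, c], c = F / I *)
  let D := lspan (fun z : F => exists x y : F, z = [[x, y]]) in
  (* G curlywedge^q G = image of phi *)
  let Im := fun e : E => exists z : E0, phi z = e in
  exists Theta : F -> E,
    [/\ (forall x y, D x -> D y -> (Theta x = Theta y <-> I (x - y))),
        (forall (a : R) x y, D x -> D y -> Theta (a *: x + y) = a *: Theta x + Theta y),
        (forall x y, D x -> D y -> Theta [[x, y]] = [[Theta x, Theta y]]),
        ((forall x, D x -> Im (Theta x)) /\
         (forall e, Im e -> exists2 x, D x & Theta x = e)) &
        (forall c1 c2 : F, Theta [[c1, c2]] = w (d c1) (d c2))].
Proof.
move=> I D Im.
have [X [i i_basis] ] := Ffree.
have [s sK] : exists s : G -> F, cancel s d.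
  by exists (fun g => sval (cid (dsurj g))) => g; case: cid.
have [tau [tau_lin tau_br] ] := exists_tau dhom i_basis HE.
exists tau; split.
- move=> x y Dx Dy; split; first exact: (tau_eq_sharp dhom sK HE tau_lin tau_br).
  move=> Ixy; apply/eqP; rewrite -subr_eq0 -(linB tau_lin); apply/eqP.
  exact: (tau_sharp_derived dhom i_basis HE tau_lin tau_br Htf (lspanB Dx Dy)).
- by move=> a x y _ _; apply: tau_lin.
- by move=> x y Dx Dy; rewrite (tau_br_derived dhom HE tau_lin tau_br).
- split=> [x|_ [e0 <-] ].
    exact: (tau_derived_in_image tau_lin tau_br (proj1 phihom) phiw).
  exact: (image_in_tau_derived sK tau_lin tau_br (proj1 phihom) phiw HE0).
- exact: tau_br.
Qed.
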